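(* Let $G=(V,E)$ be a temporal network with nonnegative timestamps, let $\pi$ be an ordering of $V$, and let $\delta\ge 0$. Let $e=(u,v,t)\in E$ with $\pi(u)<\pi(v)$, and let $w\in N^{-}_{\pi}(u)\cap N(v)$. Put $L_2=E_{u,w}$ and $L_3=E_{v,w}$, and for $f\in L_2$ let $L_{23}[f]$ be the first edge of $L_3$ (in sorted order) whose timestamp is at least $t(f)$. Define the collection of intervals $$I_{w,u,v}=\big\{\,[\max\{0,\,t(L_{23}[f])-\delta\},\ t(f)]\ :\ f\in L_2,\ L_{23}[f]\text{ exists},\ t(f)\le t(L_{23}[f])\le t(f)+\delta\,\big\}.$$ Then $e$ forms at least one $\delta$-temporal triangle with $w$ if and only if some interval in $I_{w,u,v}$ contains $t=t(e)$.
   Context: A temporal network $G=(V,E)$ is a finite multiset of temporal edges $(x,y,t)$ with $x\neq y\in V$ and timestamp $t=t(e)$ (from $x$ to $y$; parallel edges in both directions allowed). For distinct $x,y$, $E_{x,y}$ is the list of temporal edges from $x$ to $y$ sorted by increasing timestamp. $G_S$ is the simple undirected graph on $V$ with $\{x,y\}$ an edge iff some temporal edge joins $x$ and $y$; $N(x)$ is the neighbourhood of $x$ in $G_S$. For an ordering $\pi$ of $V$, $N^{-}_{\pi}(x)=\{y\in N(x):\pi(y)<\pi(x)\}$. For $\delta\ge 0$, a temporal edge $e=(a,b,t)$ forms a $\delta$-temporal triangle with a vertex $c$ if there exist temporal edges $(a,c,t_2)$ and $(b,c,t_3)$ in $E$ with $t\le t_2\le t_3\le t+\delta$. *)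

From mathcomp Require Import all_boot all_order all_algebra.
Set Implicit Arguments. Unset Strict Implicit. Unset Printing Implicit Defensive.
Import Order.TTheory GRing.Theory Num.Theory.
Local Open Scope ring_scope.

Section Temporal.
Variables (R : realDomainType) (V : finType).

Definition tedge := (V * V * R)%type.
Definition src (e : tedge) : V := e.1.1.
Definition dst (e : tedge) : V := e.1.2.
Definition tm (e : tedge) : R := e.2.

Definition temporal_network (E : seq tedge) : Prop :=
  forall e, e \in E -> src e != dst e.

Definition nonneg_timestamps (E : seq tedge) : Prop :=
  forall e, e \in E -> 0 <= tm e.

Definition adjS (E : seq tedge) (x y : V) : bool :=
  has (fun e => ((src e == x) && (dst e == y)) || ((src e == y) && (dst e == x))) E.

Definition Nbr (E : seq tedge) (x : V) : pred V := fun y => adjS E x y.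

Definition Nminus (E : seq tedge) (pi : V -> nat) (x : V) : pred V :=
  fun y => adjS E x y && (pi y < pi x)%N.

Definition Exy (E : seq tedge) (x y : V) : seq tedge :=
  sort (fun e1 e2 => tm e1 <= tm e2)
       (filter (fun e => (src e == x) && (dst e == y)) E).

Definition first_geq (L : seq tedge) (f : tedge) : option tedge :=
  ohead (filter (fun g => tm f <= tm g) L).

Definition forms_triangle (E : seq tedge) (delta : R) (e : tedge) (c : V) : Prop :=
  exists e2 e3, e2 \in E /\ e3 \in E /\
    src e2 = src e /\ dst e2 = c /\ src e3 = dst e /\ dst e3 = c /\
    tm e <= tm e2 /\ tm e2 <= tm e3 /\ tm e3 <= tm e + delta.

(* the interval collection I_{w,u,v}, as a list of pairs (lo, hi) meaning [lo, hi] *)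
Definition intervals (E : seq tedge) (delta : R) (w u v : V) : seq (R * R) :=
  let L2 := Exy E u w in
  let L3 := Exy E v w in
  pmap (fun f => match first_geq L3 f with
                 | Some g => if (tm f <= tm g) && (tm g <= tm f + delta)
                             then Some (Num.max 0 (tm g - delta), tm f)
                             else None
                 | None => None
                 end) L2.

End Temporal.

From mathcomp Require Import all_boot all_order all_algebra.
Import Order.TTheory GRing.Theory Num.Theory.
Local Open Scope ring_scope.
Set Implicit Arguments. Unset Strict Implicit. Unset Printing Implicit Defensive.

(* Since E_{v,w} is sorted by time, L_{23}[f] is the earliest edge from v to w
   not before f, so any triangle (e, f, h) can be traded for the triangle
   (e, f, L_{23}[f]).  Hence e forms a triangle with w iff some f in E_{u,w}
   has t <= t(f) and t(L_{23}[f]) <= t + delta, i.e. iff t lies in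
   [t(L_{23}[f]) - delta, t(f)]; truncating the left end at 0 changes nothing
   because t >= 0. *)

Section TemporalTriangles.
Variables (R : realDomainType) (V : finType).
Implicit Types (E L : seq (tedge R V)) (e f g h : tedge R V).

Definition tm_le : rel (tedge R V) := fun e1 e2 => tm e1 <= tm e2.

Lemma tm_le_trans : transitive tm_le.
Proof. by move=> g f h; apply: le_trans. Qed.

Lemma tm_le_total : total tm_le.
Proof. by move=> f g; apply: le_total. Qed.

Lemma mem_Exy E x y f :
  (f \in Exy E x y) = [&& src f == x, dst f == y & f \in E].
Proof. by rewrite mem_sort mem_filter andbA. Qed.

Lemma sorted_Exy E x y : sorted tm_le (Exy E x y).
Proof. exact: (sort_sorted tm_le_total). Qed.

Lemma first_geqP L f g : first_geq L f = Some g -> g \in L /\ tm f <= tm g.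
Proof.
rewrite /first_geq; case Hfilter: filter => [//|g' s] [<-].
have : g' \in filter (tm_le f) L by rewrite Hfilter mem_head.
by rewrite mem_filter => /andP[].
Qed.

Lemma first_geq_min L f h :
  sorted tm_le L -> h \in L -> tm f <= tm h ->
  exists2 g, first_geq L f = Some g & tm g <= tm h.
Proof.
move=> sortedL hL fh; rewrite /first_geq.
have : h \in filter (tm_le f) L by rewrite mem_filter hL andbT.
have := sorted_filter tm_le_trans (tm_le f) sortedL.
case: filter => [//|g s] /= sorted_gs; rewrite in_cons => /predU1P[-> | hs];
  exists g => //.
exact: (allP (order_path_min tm_le_trans sorted_gs)).
Qed.

Lemma forms_triangleP E delta e c :
  forms_triangle E delta e c <->
  exists f g, [/\ f \in Exy E (src e) c, first_geq (Exy E (dst e) c) f = Some g,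
                  tm e <= tm f & tm g <= tm e + delta].
Proof.
split.
- case=> [f [h [fE [hE [sf [df [sh [dh [ef [fh he]]]]]]]]]].
  have hL : h \in Exy E (dst e) c by rewrite mem_Exy sh dh !eqxx.
  have [g Hg gh] := first_geq_min (sorted_Exy E (dst e) c) hL fh.
  exists f, g; split=> //; first by rewrite mem_Exy sf df !eqxx.
  exact: le_trans he.
- case=> [f [g [fL Hg ef ge]]].
  have [gL fg] := first_geqP Hg.
  move: fL gL; rewrite !mem_Exy => /and3P[/eqP sf /eqP df fE] /and3P[/eqP sg /eqP dg gE].
  by exists f, g.
Qed.

Lemma mem_intervals E delta c u v I :
  I \in intervals E delta c u v <->
  exists f g, [/\ f \in Exy E u c, first_geq (Exy E v c) f = Some g,
                  tm g <= tm f + delta & I = (Num.max 0 (tm g - delta), tm f)].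
Proof.
rewrite /intervals mem_pmap; split.
- case/mapP=> f fL; case Hg: first_geq => [g|//].
  by case: ifP => // /andP[_ gf] [->]; exists f, g.
- case=> [f [g [fL Hg gf ->]]]; apply/mapP; exists f => //.
  by have [_ fg] := first_geqP Hg; rewrite Hg fg gf.
Qed.

Lemma in_truncated_interval (a s t d : R) : 0 <= a ->
  (Num.max 0 (s - d) <= a <= t) = (s <= a + d) && (a <= t).
Proof. by move=> a_ge0; rewrite ge_max a_ge0 lerBlDr. Qed.

End TemporalTriangles.

Theorem theorem3p4 (R : realDomainType) (V : finType) (E : seq (tedge R V))
  (pi : V -> nat) (delta : R) (e : tedge R V) (w : V) :
  temporal_network E -> nonneg_timestamps E ->
  injective pi -> 0 <= delta ->
  e \in E -> (pi (src e) < pi (dst e))%N ->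
  w \in Nminus E pi (src e) -> w \in Nbr E (dst e) ->
  forms_triangle E delta e w <->
  has (fun I : R * R => (I.1 <= tm e) && (tm e <= I.2))
      (intervals E delta w (src e) (dst e)).
Proof.
move=> _ nonnegE _ _ eE _ _ _.
have te_ge0 := nonnegE e eE.
split.
- case/forms_triangleP=> [f [g [fL Hg ef ge]]]; apply/hasP.
  exists (Num.max 0 (tm g - delta), tm f); last by rewrite /= in_truncated_interval // ge.
  apply/mem_intervals; exists f, g; split=> //.
  by apply: (le_trans ge); rewrite lerD2r.
- case/hasP=> I /mem_intervals [f [g [fL Hg _ ->]]].
  rewrite /= in_truncated_interval // => /andP[ge ef].
  by apply/forms_triangleP; exists f, g.
Qed.
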